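(* Let $n=p^{\alpha}q^{\beta}$ where $p,q$ are distinct primes and $\alpha,\beta\geq 1$ are integers. Then the complement graph $\mathbb{AG}^c(\mathbb{Z}_n)$ of $\mathbb{AG}(\mathbb{Z}_n)$ has no induced cycle of odd length greater than $3$.
   Context: For a commutative ring $R$ with unity, the annihilating-ideal graph $\mathbb{AG}(R)$ is the simple graph whose vertex set is the set of all non-zero ideals of $R$ with non-zero annihilator, two distinct vertices $I,J$ being adjacent if and only if $IJ=0$. $\mathbb{AG}^c(R)$ denotes its complement (same vertex set, two distinct vertices adjacent iff they are not adjacent in $\mathbb{AG}(R)$). An induced cycle is an induced subgraph isomorphic to a cycle. *)

From mathcomp Require Import all_boot all_order all_algebra.
Set Implicit Arguments. Unset Strict Implicit. Unset Printing Implicit Defensive.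
Import GRing.Theory.
Local Open Scope ring_scope.

Definition is_ideal (R : finComNzRingType) (I : {set R}) : bool :=
  [&& (0 \in I),
      [forall x in I, forall y in I, x - y \in I] &
      [forall r : R, forall x in I, r * x \in I]].

(* The ideal product IJ (the ideal generated by all x*y, x in I, y in J)
   is zero iff every such product x*y is zero. *)
Definition ideal_prod_zero (R : finComNzRingType) (I J : {set R}) : bool :=
  [forall x in I, forall y in J, x * y == 0].

Definition ann_nonzero (R : finComNzRingType) (I : {set R}) : bool :=
  [exists r : R, (r != 0) && [forall x in I, r * x == 0]].

Definition AG_vertex (R : finComNzRingType) (I : {set R}) : bool :=
  [&& is_ideal I, I != [set 0] & ann_nonzero I].

Definition AG_adj (R : finComNzRingType) (I J : {set R}) : bool :=
  (I != J) && ideal_prod_zero I J.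

Definition AGc_adj (R : finComNzRingType) (I J : {set R}) : bool :=
  (I != J) && ~~ AG_adj I J.

Definition cycle_adj (k : nat) (i j : 'I_k) : bool :=
  (j == (i.+1 %% k)%N :> nat) || (i == (j.+1 %% k)%N :> nat).

Definition has_induced_cycle (T : finType) (V : pred T) (e : rel T) (k : nat)
  : Prop :=
  exists f : 'I_k -> T,
    [/\ injective f, (forall i, V (f i)) &
        (forall i j, e (f i) (f j) = cycle_adj i j)].

From mathcomp Require Import all_boot all_order all_algebra.
From mathcomp Require Import zify.

(* Write n = P Q with P = p^alpha and Q = q^beta.  Distinct ideals are
   adjacent in AG^c(Z_n) exactly when they contain x, y with P not dividing
   x y or Q not dividing x y, so the edges are covered by two relations.
   Each of them is dominating: of two related pairs of ideals, the one holding
   the witness of least p-part (resp. q-part) is related to all four ideals.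
   Among five consecutive edges of an induced cycle of length at least 5, two
   disjoint edges come from the same relation, and the dominating ideal would
   then have three neighbours on the cycle.  Oddness is only used to rule out
   length 4. *)

Set Implicit Arguments.
Unset Strict Implicit.
Unset Printing Implicit Defensive.

Definition dominating (T : eqType) (r : rel T) :=
  forall a b c d, r a b -> r c d ->
    has (fun w => all (r w) [:: a; b; c; d]) [:: a; b; c; d].

Lemma cycle_adjE k (i j : 'I_k) :
  cycle_adj i j = (j == ordS i) || (j == ord_pred i).
Proof.
rewrite /cycle_adj; congr (_ || _).
rewrite -[_ == _ :> nat]/(i == ordS j).
by rewrite -(inj_eq (@ord_pred_inj k)) ordSK eq_sym.
Qed.

Lemma cycle_adj_uniq_size k (m : 'I_k) (s : seq 'I_k) :
  uniq s -> all (cycle_adj m) s -> size s <= 2.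
Proof.
move=> s_uniq /allP s_adj.
apply: (uniq_leq_size (s2 := [:: ordS m; ord_pred m])) => // z /s_adj.
by rewrite cycle_adjE !inE.
Qed.

(* The edges {a, a+1} and {b, b+1} are disjoint and lie among six consecutive
   vertices of the cycle. *)
Lemma bool_repeat_at_gap (c : nat -> bool) :
  exists a b, [/\ a.+1 < b, b <= a + 3, b <= 4 & c a = c b].
Proof.
have [e02|n02] := eqVneq (c 0) (c 2); first by exists 0, 2.
have [e03|n03] := eqVneq (c 0) (c 3); first by exists 0, 3.
have [e13|n13] := eqVneq (c 1) (c 3); first by exists 1, 3.
have [e14|n14] := eqVneq (c 1) (c 4); first by exists 1, 4.
exists 2, 4; move: n02 n03 n13 n14.
by case: (c 0) (c 1) (c 2) (c 3) (c 4) => [] [] [] [] [].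
Qed.

Section InducedCycle.

Variables (T : finType) (e : rel T) (k : nat) (f : 'I_k -> T).
Hypotheses (f_inj : injective f)
           (f_adj : forall i j, e (f i) (f j) = cycle_adj i j).

Lemma induced_cycle_dominating (r : rel T) (i j l m : 'I_k) :
  dominating r -> (forall x y, x != y -> r x y -> e x y) ->
  uniq [:: i; j; l; m] -> r (f i) (f j) -> r (f l) (f m) -> False.
Proof.
move=> r_dom r_e s_uniq rij rlm; set s := [:: i; j; l; m] in s_uniq.
have /hasP [_ /mapP [o os ->] /allP o_dom] :
  has (fun w => all (r w) (map f s)) (map f s) by exact: r_dom.
suff : all (cycle_adj o) (rem o s).
  by move/(cycle_adj_uniq_size (rem_uniq o s_uniq)); rewrite size_rem.
apply/allP => z; rewrite (mem_rem_uniq _ s_uniq) inE => /andP [zo zs].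
by rewrite -f_adj r_e ?(inj_eq f_inj) 1?eq_sym // o_dom ?map_f.
Qed.

Hypothesis k_gt4 : 4 < k.

Definition cyc (j : nat) : 'I_k :=
  Ordinal (ltn_pmod j (leq_ltn_trans (leq0n 4) k_gt4)).

Lemma cycle_adj_cyc j : cycle_adj (cyc j) (cyc j.+1).
Proof. by rewrite /cycle_adj /= -(addn1 j) -(addn1 (j %% k)) modnDml eqxx. Qed.

Lemma cyc_eqF a b : a < b -> b - a < k -> (cyc a == cyc b) = false.
Proof.
move=> ab ba; rewrite -val_eqE /= eq_sym eqn_mod_dvd ?(ltnW ab) //.
by rewrite gtnNdvd ?subn_gt0.
Qed.

Lemma induced_cycle_two_cover (rp rq : rel T) :
  dominating rp -> dominating rq ->
  (forall x y, x != y -> rp x y -> e x y) ->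
  (forall x y, x != y -> rq x y -> e x y) ->
  (forall x y, e x y -> rp x y || rq x y) -> False.
Proof.
move=> p_dom q_dom p_e q_e e_pq.
pose c j := rp (f (cyc j)) (f (cyc j.+1)).
have c_rq j : ~~ c j -> rq (f (cyc j)) (f (cyc j.+1)).
  have e_j := etrans (f_adj _ _) (cycle_adj_cyc j).
  by rewrite /c; case/orP: (e_pq _ _ e_j) => ->.
have [a [b [ab ba b4 cab]]] := bool_repeat_at_gap c.
have ab_uniq : uniq [:: cyc a; cyc a.+1; cyc b; cyc b.+1].
  by rewrite /= !inE !cyc_eqF //; lia.
case ca: (c a) in cab.
- exact: (induced_cycle_dominating p_dom p_e ab_uniq ca).
- apply: (induced_cycle_dominating q_dom q_e ab_uniq (c_rq a _) (c_rq b _));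
    by rewrite ?ca -?cab.
Qed.

End InducedCycle.

Theorem dominating_cover_no_long_induced_cycle (T : finType) (V : pred T)
    (e rp rq : rel T) k :
  4 < k -> dominating rp -> dominating rq ->
  (forall x y, x != y -> rp x y -> e x y) ->
  (forall x y, x != y -> rq x y -> e x y) ->
  (forall x y, e x y -> rp x y || rq x y) ->
  ~ has_induced_cycle V e k.
Proof.
move=> k_gt4 p_dom q_dom p_e q_e e_pq [f [f_inj _ f_adj]].
exact: (induced_cycle_two_cover f_inj f_adj k_gt4 p_dom q_dom p_e q_e e_pq).
Qed.

Definition set_rel (T : finType) (r : rel T) : rel {set T} :=
  fun A B => [exists x in A, exists y in B, r x y].

Lemma set_rel_dominating (T : finType) (r : rel T) :
  dominating r -> dominating (set_rel r).
Proof.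
move=> r_dom A B C D.
move=> /exists_inP [x1 x1A /exists_inP [y1 y1B r1]].
move=> /exists_inP [x2 x2C /exists_inP [y2 y2D r2]].
set S := [:: A; B; C; D]; set s := [:: x1; y1; x2; y2].
have s_in_S i : i < 4 -> nth x1 s i \in nth A S i by case: i => [|[|[|[|]]]].
have /hasP [_ /(nthP x1) [i i_lt <-] /allP i_dom] := r_dom _ _ _ _ r1 r2.
apply/hasP; exists (nth A S i); first exact: mem_nth.
apply/allP => _ /(nthP A) [j j_lt <-].
apply/exists_inP; exists (nth x1 s i); first exact: s_in_S.
apply/exists_inP; exists (nth x1 s j); first exact: s_in_S.
exact/i_dom/mem_nth.
Qed.

Lemma exists_argmin_seq (T : eqType) (g : T -> nat) (s : seq T) x :
  x \in s -> exists2 w, w \in s & forall z, z \in s -> g w <= g z.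
Proof.
move=> xs; have i0 : 'I_(size s) := Ordinal (etrans (index_mem x s) xs).
have [i _ i_min] :=
  arg_minnP (fun i : 'I_(size s) => g (nth x s i)) (isT : predT i0).
exists (nth x s i); first exact: mem_nth.
by move=> _ /(nthP x) [j j_lt <-]; exact: (i_min (Ordinal j_lt)).
Qed.

Lemma dvdn_mul_gcdl M a c : (M %| a * c) = (M %| gcdn a M * c).
Proof.
apply/idP/idP => [M_ac | M_gc].
  by rewrite muln_gcdl dvdn_gcd M_ac dvdn_mulr.
exact: dvdn_trans M_gc (dvdn_mul (dvdn_gcdl a M) (dvdnn c)).
Qed.

Lemma dvdn_mul_gcd_trans M a b c :
  gcdn a M %| gcdn b M -> M %| a * c -> M %| b * c.
Proof.
rewrite dvdn_mul_gcdl (dvdn_mul_gcdl _ b) => ab /dvdn_trans-> //.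
by rewrite dvdn_mul.
Qed.

Lemma gcdn_pfactor_dvd p n u v : prime p ->
  gcdn u (p ^ n) <= gcdn v (p ^ n) -> gcdn u (p ^ n) %| gcdn v (p ^ n).
Proof.
move=> p_pr; case/(dvdn_pfactor _ _ p_pr): (dvdn_gcdr u (p ^ n)) => i _ ->.
case/(dvdn_pfactor _ _ p_pr): (dvdn_gcdr v (p ^ n)) => j _ ->.
by rewrite leq_exp2l ?prime_gt1 // => ij; rewrite dvdn_exp2l.
Qed.

Definition nondvd_mul (M : nat) {m : nat} (x y : 'I_m) : bool :=
  ~~ (M %| x * y).

(* The witness w of least p-part works: every witness z has a partner z' with
   p^n not dividing z z', and replacing z' by w can only lower the p-part. *)
Lemma nondvd_mul_pfactor_dominating p n m :
  prime p -> dominating (@nondvd_mul (p ^ n) m).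
Proof.
move=> p_pr x1 y1 x2 y2 r1 r2; set s := [:: x1; y1; x2; y2].
have partner z : z \in s -> exists2 z', z' \in s & nondvd_mul (p ^ n) z z'.
  rewrite !inE => /or4P [] /eqP ->;
    [exists y1 | exists x1 | exists y2 | exists x2];
    by rewrite ?inE ?eqxx ?orbT // /nondvd_mul mulnC.
have [w ws w_min] :=
  exists_argmin_seq (fun x : 'I_m => gcdn x (p ^ n)) (mem_head x1 _ : x1 \in s).
apply/hasP; exists w => //; apply/allP => z /partner [z' z's]; apply: contra.
move/(dvdn_mul_gcd_trans (gcdn_pfactor_dvd p_pr (w_min _ z's))).
by rewrite mulnC.
Qed.

Lemma Zp_mul_eq0 n (x y : 'Z_n) : 1 < n -> (x * y == 0)%R = (n %| x * y).
Proof.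
(* Generalizing the values keeps Zp_cast from rewriting the types of x, y. *)
move=> n_gt1; rewrite -val_eqE /=; move: (nat_of_ord x) (nat_of_ord y) => a b.
by rewrite Zp_cast.
Qed.

Lemma AGc_adj_split n P Q (A B : {set 'Z_n}) :
  n = P * Q -> coprime P Q -> 1 < n -> AGc_adj A B ->
  set_rel (nondvd_mul P) A B || set_rel (nondvd_mul Q) A B.
Proof.
move=> nPQ PQ_coprime n_gt1 /andP [AB]; rewrite /AG_adj AB /=.
have n_dvd m : (n %| m) = (P %| m) && (Q %| m) by rewrite nPQ Gauss_dvd.
case/forall_inPn => x xA /forall_inPn [y yB].
rewrite Zp_mul_eq0 // n_dvd negb_and.
by case/orP => nd; apply/orP; [left | right];
  apply/exists_inP; exists x => //; apply/exists_inP; exists y.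
Qed.

Lemma set_rel_nondvd_mul_AGc_adj n M (A B : {set 'Z_n}) :
  M %| n -> 1 < n -> A != B -> set_rel (nondvd_mul M) A B -> AGc_adj A B.
Proof.
move=> Mn n_gt1 AB /exists_inP [x xA /exists_inP [y yB nd]].
rewrite /AGc_adj /AG_adj AB /=; apply/forall_inPn; exists x => //.
apply/forall_inPn; exists y => //.
by rewrite Zp_mul_eq0 //; apply: contra nd => /(dvdn_trans Mn).
Qed.

Theorem lemma7 (p q alpha beta : nat) :
  prime p -> prime q -> p != q -> (0 < alpha)%N -> (0 < beta)%N ->
  forall k : nat, odd k -> (3 < k)%N ->
    ~ has_induced_cycle (@AG_vertex 'Z_(p ^ alpha * q ^ beta))
                        (@AGc_adj 'Z_(p ^ alpha * q ^ beta)) k.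
Proof.
move=> p_pr q_pr pq alpha_gt0 beta_gt0 k k_odd k_gt3.
set n := p ^ alpha * q ^ beta.
have k_gt4 : 4 < k.
  by rewrite ltn_neqAle k_gt3 andbT; apply: contraTneq k_odd => <-.
have n_gt1 : 1 < n.
  rewrite -(muln1 1); apply: ltn_mul; [rewrite -(expn0 p) | rewrite -(expn0 q)];
    by rewrite ltn_exp2l ?prime_gt1.
have pq_coprime : coprime (p ^ alpha) (q ^ beta).
  by rewrite coprime_pexpl // coprime_pexpr // prime_coprime // dvdn_prime2.
apply: (dominating_cover_no_long_induced_cycle
          (rp := set_rel (nondvd_mul (p ^ alpha)))
          (rq := set_rel (nondvd_mul (q ^ beta))) k_gt4).
- exact/set_rel_dominating/nondvd_mul_pfactor_dominating.
- exact/set_rel_dominating/nondvd_mul_pfactor_dominating.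
- by move=> A B; apply: set_rel_nondvd_mul_AGc_adj; rewrite ?dvdn_mulr.
- by move=> A B; apply: set_rel_nondvd_mul_AGc_adj; rewrite ?dvdn_mull.
- by move=> A B; apply: AGc_adj_split.
Qed.
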